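(* Let $q$ be a prime power and $T\in\mathbb F_q[X,Y,Z]$ a reduced polynomial. Consider the properties: (a) $T(a,0,z)=T(0,b,z)=z$ for all $a,b,z\in\mathbb F_q$; (c) for all $a,b,c,d\in\mathbb F_q$ with $a\neq c$ there is a unique $x\in\mathbb F_q$ with $T(x,a,b)=T(x,c,d)$; (d) for all $a,b,c\in\mathbb F_q$ there is a unique $z\in\mathbb F_q$ with $T(a,b,z)=c$; (e) for all $a,b,c,d\in\mathbb F_q$ with $a\neq c$ there is a unique pair $(y,z)\in\mathbb F_q^2$ with $T(a,y,z)=b$ and $T(c,y,z)=d$. Then: (i) if $T$ satisfies (a) and (c), then $T(X,y,z)$ is a permutation polynomial in $X$ over $\mathbb F_q$ for every $(y,z)\in\mathbb F_q^*\times\mathbb F_q$; (ii) if $T$ satisfies (a) and (e), then $T(x,Y,z)$ is a permutation polynomial in $Y$ over $\mathbb F_q$ for every $(x,z)\in\mathbb F_q^*\times\mathbb F_q$; (iii) if $T$ satisfies (d), then $T(x,y,Z)$ is a permutation polynomial in $Z$ over $\mathbb F_q$ for every $(x,y)\in\mathbb F_q\times\mathbb F_q$.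
   Context: A polynomial is reduced if its degree in each variable is less than $q$. A univariate polynomial $f\in\mathbb F_q[X]$ is a permutation polynomial over $\mathbb F_q$ if $x\mapsto f(x)$ is a bijection of $\mathbb F_q$. $\mathbb F_q^*$ denotes the nonzero elements of $\mathbb F_q$. *)

From HB Require Import structures.
From mathcomp Require Import all_boot all_order all_algebra all_field.
From mathcomp Require Import mpoly.
Set Implicit Arguments. Unset Strict Implicit. Unset Printing Implicit Defensive.
Import GRing.Theory.
Local Open Scope ring_scope.

(* The finite field F_q is an arbitrary finite field F, with q = #|F|. *)

Definition reduced (F : finFieldType) (n : nat) (T : {mpoly F[n]}) : Prop :=
  forall m : 'X_{1..n}, m \in msupp T -> forall i : 'I_n, (m i < #|F|)%N.

Definition ev3 (F : finFieldType) (T : {mpoly F[3]}) (a b c : F) : F :=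
  T.@[fun i : 'I_3 => nth 0 [:: a; b; c] i].

Definition specX (F : finFieldType) (T : {mpoly F[3]}) (y z : F) : {poly F} :=
  mmap (@polyC F) (fun i : 'I_3 => nth 0 [:: 'X; y%:P; z%:P] i) T.
Definition specY (F : finFieldType) (T : {mpoly F[3]}) (x z : F) : {poly F} :=
  mmap (@polyC F) (fun i : 'I_3 => nth 0 [:: x%:P; 'X; z%:P] i) T.
Definition specZ (F : finFieldType) (T : {mpoly F[3]}) (x y : F) : {poly F} :=
  mmap (@polyC F) (fun i : 'I_3 => nth 0 [:: x%:P; y%:P; 'X] i) T.

Definition perm_poly (F : finFieldType) (f : {poly F}) : Prop :=
  bijective (fun x : F => f.[x]).

From HB Require Import structures.
From mathcomp Require Import all_boot all_order all_algebra all_field.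
From mathcomp Require Import mpoly.
Import GRing.Theory.
Local Open Scope ring_scope.

(* A map of F_q to itself that takes every value exactly once is a bijection,
   so it suffices to see that each specialisation does.  For (i), (a) gives
   T(x,0,d) = d, so (c) for the points (y,z) and (0,d) says that T(X,y,z) = d
   has exactly one solution.  For (ii), (e) for the abscissae 0 and x, with
   values z and d, has a unique solution (y,z'), and (a) forces z' = z.  For
   (iii) this is (d) itself. *)

Lemma bij_of_exists_unique (A : choiceType) (B : eqType) (f : A -> B) :
  (forall b, exists! a, f a = b) -> bijective f.
Proof.
move=> f_uniq; have f_onto b : exists a, f a == b.
  by have [a [fa _]] := f_uniq b; exists a; apply/eqP.
exists (fun b => xchoose (f_onto b)) => [a | b]; last exact/eqP/(xchooseP (f_onto b)).
have [a0 [_ a0_uniq]] := f_uniq (f a).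
by rewrite -(a0_uniq _ (eqP (xchooseP (f_onto (f a))))) (a0_uniq a).
Qed.

Lemma perm_polyP (F : finFieldType) (f : {poly F}) :
  (forall c, exists! x, f.[x] = c) -> perm_poly f.
Proof. exact: bij_of_exists_unique. Qed.

Lemma horner_mmap_polyC (R : comNzRingType) (n : nat) (g : 'I_n -> {poly R})
    (p : {mpoly R[n]}) (x : R) :
  (mmap (@polyC R) g p).[x] = p.@[fun i => (g i).[x]].
Proof.
rewrite /mmap mevalE horner_sum; apply: eq_bigr => m _.
rewrite hornerM hornerC horner_prod; congr (_ * _).
by apply: eq_bigr => i _; rewrite horner_exp.
Qed.

Section Specialisations.

Variables (F : finFieldType) (T : {mpoly F[3]}).

Lemma specXE y z x : (specX T y z).[x] = ev3 T x y z.
Proof.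
rewrite horner_mmap_polyC.
by apply: meval_eq => -[[|[|[|//]]] ?] /=; rewrite ?hornerX ?hornerC.
Qed.

Lemma specYE x z y : (specY T x z).[y] = ev3 T x y z.
Proof.
rewrite horner_mmap_polyC.
by apply: meval_eq => -[[|[|[|//]]] ?] /=; rewrite ?hornerX ?hornerC.
Qed.

Lemma specZE x y z : (specZ T x y).[z] = ev3 T x y z.
Proof.
rewrite horner_mmap_polyC.
by apply: meval_eq => -[[|[|[|//]]] ?] /=; rewrite ?hornerX ?hornerC.
Qed.

Lemma perm_poly_specX y z :
  (forall x z, ev3 T x 0 z = z) ->
  (forall a b c d, a != c -> exists! x, ev3 T x a b = ev3 T x c d) ->
  y != 0 -> perm_poly (specX T y z).
Proof.
move=> T_x0z T_lines y_neq0; apply: perm_polyP => d.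
have [x [Tx x_uniq]] := T_lines y z 0 d y_neq0.
exists x; split => [|x' Tx']; first by rewrite specXE Tx T_x0z.
by apply: x_uniq; rewrite T_x0z -specXE.
Qed.

Lemma perm_poly_specY x z :
  (forall y z, ev3 T 0 y z = z) ->
  (forall a b c d, a != c ->
     exists! yz : F * F, ev3 T a yz.1 yz.2 = b /\ ev3 T c yz.1 yz.2 = d) ->
  x != 0 -> perm_poly (specY T x z).
Proof.
move=> T_0yz T_pairs x_neq0; apply: perm_polyP => d.
have x_neq0' : 0 != x by rewrite eq_sym.
have [[y z'] [/= [T0 Tx] yz_uniq]] := T_pairs 0 z x d x_neq0'.
rewrite T_0yz in T0; subst z'.
exists y; split => [|y' Ty']; first by rewrite specYE.
have := yz_uniq (y', z); rewrite /= T_0yz -specYE Ty'.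
by case/(_ (conj erefl erefl)).
Qed.

Lemma perm_poly_specZ x y :
  (forall a b c, exists! z, ev3 T a b z = c) -> perm_poly (specZ T x y).
Proof.
move=> T_levels; apply: perm_polyP => c.
have [z [Tz z_uniq]] := T_levels x y c.
by exists z; split => [|z' Tz']; rewrite ?specZE //; apply: z_uniq; rewrite -specZE.
Qed.

End Specialisations.

Theorem theorem4p2 (F : finFieldType) (T : {mpoly F[3]}) :
  reduced T ->
  let Pa := forall a b z : F, ev3 T a 0 z = z /\ ev3 T 0 b z = z in
  let Pc := forall a b c d : F, a != c ->
              exists! x : F, ev3 T x a b = ev3 T x c d in
  let Pd := forall a b c : F, exists! z : F, ev3 T a b z = c in
  let Pe := forall a b c d : F, a != c ->
              exists! yz : F * F, ev3 T a yz.1 yz.2 = b /\ ev3 T c yz.1 yz.2 = d in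
  [/\ (Pa -> Pc -> forall y z : F, y != 0 -> perm_poly (specX T y z)),
      (Pa -> Pe -> forall x z : F, x != 0 -> perm_poly (specY T x z)) &
      (Pd -> forall x y : F, perm_poly (specZ T x y))].
Proof.
move=> _ Pa Pc Pd Pe; split => [Ta Tc y z | Ta Te x z | Td x y].
- by apply: perm_poly_specX => // x' z'; case: (Ta x' 0 z').
- by apply: perm_poly_specY => // y' z'; case: (Ta 0 y' z').
- exact: perm_poly_specZ.
Qed.
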